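(* Let $\Phi:[0,\infty)\to[0,\infty)$ be convex and non-decreasing and let $(\mu_n)$ be a sequence of reals. Assume that, in the setting described in the context, assumptions (A1), (A2), (A3) and (A4) hold, that the function $c(v)$ in (A4) is a constant $c>0$ not depending on $v$, and that $\varphi(n):=\sup_{v\in\mathcal V_n}\varphi_v(n)\to0$ as $n\to\infty$. If, in addition, there exists $b_o>0$ such that $P(V\in\mathcal V_n)\ge b_o$ for all sufficiently large $n$, then for every constant $c_o\in(0,b_oc/8)$ and every sufficiently large $n$, $$E\,\Phi\big(|L(Z)-\mu_n|\big)\ \ge\ \Phi\Big(\frac{\epsilon_o c}{16\,\varphi(n)}\Big)\,c_o .$$
   Context: For each $n$, $Z$ is a random element of a finite set $\mathcal Z_n$ and $L:\mathcal Z_n\to\mathbb R$ is a function (a score). A random transformation $\mathcal R:\mathcal Z_n\to\mathcal Z_n$ is a random map whose randomness is independent of $Z$; for a function $g$, $E[g(\mathcal R(Z))\mid Z]$ denotes expectation over the randomness of $\mathcal R$ only. Let $\mathfrak u:\mathcal Z_n\to\mathbb Z$ and $\mathfrak v:\mathcal Z_n\to\mathbb Z^d$ be functions, $U:=\mathfrak u(Z)$, $V:=\mathfrak v(Z)$. Let $\mathcal S_n,\mathcal S_n^U,\mathcal S_n^V$ denote the supports of the laws of $(U,V)$, $U$, $V$ respectively, and for $v\in\mathcal S_n^V$ let $\mathcal S_n(v):=\{u\in\mathcal S_n^U:(u,v)\in\mathcal S_n\}$. For $(u,v)\in\mathcal S_n$ let $P_{(u,v)}$ be the law of $Z$ conditioned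 on $U=u,V=v$. A ''universal constant'' means one not depending on $n$. Assumptions: (A1) There exist a constant $\epsilon_o>0$ and a sequence $\Delta_n\to0$ such that $P\big(E[L(\mathcal R(Z))-L(Z)\mid Z]\ge\epsilon_o\big)\ge1-\Delta_n$. (A2) There is a constant $A<\infty$ with $L(\mathcal R(Z))-L(Z)\ge -A$ always. (A3) There exist sets $\mathcal V_n\subset\mathcal S_n^V$ and, for $v\in\mathcal V_n$, sets of consecutive integers $\mathcal U_n(v)=\{u_n(v)+1,\dots,u_n(v)+m_n(v)\}\subset\mathcal S_n(v)$ such that for every $v\in\mathcal V_n$ and $u\in\mathcal U_n(v)$: if $Z\sim P_{(u,v)}$ then $\mathcal R(Z)\sim P_{(u+1,v)}$. (A4) There exist $n_1>0$ and a function $c(v)>0$ (not depending on $n$) such that for every $n\ge n_1$ and every $v\in\mathcal V_n$, $m_n(v)\ge c(v)\varphi_v(n)^{-1}$, where $\varphi_v(n)>0$ satisfies $\min_{u\in\mathcal U_n(v)}P(U=u\mid V=v)\ge\varphi_v(n)$. *)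

From HB Require Import structures.
From mathcomp Require Export all_boot all_order all_algebra.
From mathcomp Require Export all_classical all_reals all_analysis.
Set Implicit Arguments. Unset Strict Implicit. Unset Printing Implicit Defensive.
Import Order.TTheory GRing.Theory Num.Theory.
Local Open Scope ring_scope.

Section Defs.
Context {R : realType} {T : finType}.

Definition is_pmf (P : T -> R) : Prop :=
  (forall z, 0 <= P z) /\ \sum_z P z = 1.

Definition Pr (P : T -> R) (A : pred T) : R := \sum_(z | A z) P z.

Definition Exp (P : T -> R) (g : T -> R) : R := \sum_z P z * g z.

(* Law of Z conditioned on the event {w(Z)} (Pr P w > 0 assumed when used). *)
Definition condlaw (P : T -> R) (w : pred T) (z : T) : R :=
  P z * (w z)%:R / Pr P w.

(* The random transformation is a random map T -> T, i.e. a random element of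
   the finite type {ffun T -> T}, with law Q, independent of Z.
   E[g(R(Z)) | Z = z] : *)
Definition condE_R (Q : {ffun T -> T} -> R) (g : T -> R) (z : T) : R :=
  \sum_f Q f * g (f z).

(* law of R(Z) when Z ~ Pz and R ~ Q independently *)
Definition pushR (Q : {ffun T -> T} -> R) (Pz : T -> R) (z' : T) : R :=
  \sum_z \sum_f Pz z * Q f * (f z == z')%:R.

End Defs.

Definition convex_nonneg {R : realType} (Phi : R -> R) : Prop :=
  forall x y t, 0 <= x -> 0 <= y -> 0 <= t <= 1 ->
    Phi (t * x + (1 - t) * y) <= t * Phi x + (1 - t) * Phi y.

Definition nondecr_nonneg {R : realType} (Phi : R -> R) : Prop :=
  forall x y, 0 <= x -> x <= y -> Phi x <= Phi y.

From HB Require Import structures.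
From mathcomp Require Import all_boot all_order all_algebra.
From mathcomp Require Import all_classical all_reals all_analysis.
From mathcomp Require Import lra ring zify.
Set Implicit Arguments. Unset Strict Implicit. Unset Printing Implicit Defensive.
Import Order.TTheory GRing.Theory Num.Theory.
Local Open Scope ring_scope.
Local Open Scope classical_set_scope.

(* Fix a fiber V = v of V_n and follow the chain of cells U = u_n(v) + 1, ...,
   u_n(v) + m_n(v).  By (A3) the transformation carries the law of Z on one cell
   to the law on the next one, so by (A1)-(A2) the conditional means of L on
   consecutive cells increase by at least eps0, up to a loss (eps0 + A) times the
   conditional mass of the set where the drift is below eps0.  If that loss is
   small, two cells half a chain apart have means at least
   m eps0 / 4 >= eps0 c / (4 phi_v) apart, so one of them is far from mu_n, and
   Jensen's inequality on each cell together with the lower bound phi_v on the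
   cell masses gives a lower bound on E[Phi |L - mu_n|; V = v]; otherwise the
   fiber mass is controlled by the low-drift mass.  Summing over v in V_n, the
   total low-drift mass is at most Delta_n by (A1). *)

Section Jensen.
Variables (R : realType) (g : R -> R).
Hypothesis g_convex : forall x y t : R, 0 <= t <= 1 ->
  g (t * x + (1 - t) * y) <= t * g x + (1 - t) * g y.

Lemma jensen_seq (I : eqType) (s : seq I) (w f : I -> R) : (forall i, 0 <= w i) ->
  (\sum_(i <- s) w i) * g ((\sum_(i <- s) w i * f i) / \sum_(i <- s) w i)
  <= \sum_(i <- s) w i * g (f i).
Proof.
move=> w_ge0; elim: s => [|a s IHs]; first by rewrite !big_nil mul0r.
rewrite !big_cons.
set W := \sum_(i <- s) w i; set S := \sum_(i <- s) w i * f i.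
have W_ge0 : 0 <= W by apply: sumr_ge0.
have wa_ge0 := w_ge0 a.
have [W0|W_neq0] := eqVneq W 0.
  have w_s0 i : i \in s -> w i = 0.
    by move: W0 => /eqP; rewrite psumr_eq0 // => /allP H /H /eqP.
  have -> : S = 0 by rewrite /S big_seq big1 // => i /w_s0 ->; rewrite mul0r.
  rewrite W0 big_seq big1 => [|i /w_s0 ->]; last by rewrite mul0r.
  rewrite !addr0; have [->|wa_neq0] := eqVneq (w a) 0; first by rewrite !mul0r.
  by rewrite mulrAC divff // mul1r.
have W_gt0 : 0 < W by rewrite lt_def W_neq0.
set t := w a / (w a + W).
have t01 : 0 <= t <= 1.
  by apply/andP; split; [apply: divr_ge0; lra | rewrite ler_pdivrMr; lra].
have -> : (w a * f a + S) / (w a + W) = t * f a + (1 - t) * (S / W).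
  by rewrite /t; field; rewrite W_neq0 /=; apply: lt0r_neq0; lra.
have wW_ge0 : 0 <= w a + W by lra.
apply: le_trans (ler_wpM2l wW_ge0 (g_convex (f a) (S / W) t01)) _.
have -> : (w a + W) * (t * g (f a) + (1 - t) * g (S / W))
    = w a * g (f a) + W * g (S / W).
  by rewrite /t; field; apply: lt0r_neq0; lra.
by rewrite lerD2l.
Qed.

Lemma jensen_pmf (T : finType) (w f : T -> R) : is_pmf w ->
  g (\sum_z w z * f z) <= \sum_z w z * g (f z).
Proof.
by case=> w_ge0 w1; have := @jensen_seq _ (index_enum T) w f w_ge0; rewrite w1 divr1 mul1r.
Qed.

End Jensen.

Lemma convex_comp_dist (R : realType) (Phi : R -> R) (mu : R) :
  convex_nonneg Phi -> nondecr_nonneg Phi ->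
  forall x y t, 0 <= t <= 1 ->
  Phi `|t * x + (1 - t) * y - mu| <= t * Phi `|x - mu| + (1 - t) * Phi `|y - mu|.
Proof.
move=> Phi_conv Phi_mono x y t /andP[t_ge0 t_le1].
apply: le_trans (Phi_conv _ _ t (normr_ge0 _) (normr_ge0 _) _); last exact/andP.
apply: Phi_mono => //.
have -> : t * x + (1 - t) * y - mu = t * (x - mu) + (1 - t) * (y - mu) by ring.
apply: le_trans (ler_normD _ _) _.
by rewrite !normrM (ger0_norm t_ge0) (@ger0_norm _ (1 - t)) ?subr_ge0.
Qed.

Definition cexp {R : realType} {T : finType} (P : T -> R) (w : pred T) (h : T -> R) : R :=
  \sum_z condlaw P w z * h z.

Definition low_drift {R : realType} {T : finType} (Q : {ffun T -> T} -> R) (L : T -> R)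
  (eps : R) : pred T :=
  fun z => condE_R Q L z - L z < eps.

Section Conditioning.
Variables (R : realType) (T : finType) (P : T -> R).
Hypothesis P_ge0 : forall z, 0 <= P z.

Lemma Pr_indicator (w : pred T) : Pr P w = \sum_z P z * (w z)%:R.
Proof. by rewrite /Pr big_mkcond; apply: eq_bigr => z _; case: (w z); rewrite ?mulr1 ?mulr0. Qed.

Lemma le_Pr (w1 w2 : pred T) : (forall z, w1 z -> w2 z) -> Pr P w1 <= Pr P w2.
Proof.
move=> w12; rewrite !Pr_indicator; apply: ler_sum => z _.
by apply: ler_wpM2l => //; case: (boolP (w1 z)) => [/w12 ->|_]; case: (w2 z).
Qed.

Lemma Pr_predC (w : pred T) : \sum_z P z = 1 -> Pr P (predC w) = 1 - Pr P w.
Proof. by move=> <-; rewrite (bigID w) /= addrC addrK. Qed.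

Lemma condlaw_ge0 (w : pred T) z : 0 <= condlaw P w z.
Proof. by rewrite /condlaw divr_ge0 ?mulr_ge0 ?ler0n ?sumr_ge0. Qed.

Lemma condlaw_pmf (w : pred T) : 0 < Pr P w -> is_pmf (condlaw P w).
Proof.
move=> w_gt0; split=> [z|]; first exact: condlaw_ge0.
by rewrite /condlaw -mulr_suml -Pr_indicator divff // gt_eqF.
Qed.

Lemma Pr_mul_cexp (w : pred T) (h : T -> R) : Pr P w != 0 ->
  Pr P w * cexp P w h = \sum_(z | w z) P z * h z.
Proof.
move=> w_neq0; rewrite /cexp mulr_sumr [RHS]big_mkcond; apply: eq_bigr => z _.
by rewrite /condlaw; case: (w z); rewrite /= ?mulr0 ?mul0r //; field.
Qed.

Lemma ler_cexp (w : pred T) (h1 h2 : T -> R) :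
  (forall z, 0 < P z -> w z -> h1 z <= h2 z) -> cexp P w h1 <= cexp P w h2.
Proof.
move=> h12; apply: ler_sum => z _; rewrite /condlaw.
have := P_ge0 z; rewrite le_eqVlt => /orP[/eqP<-|Pz_gt0]; first by rewrite !mul0r.
case: (boolP (w z)) => [wz|_]; last by rewrite mulr0 !mul0r.
by apply: ler_wpM2l; [rewrite divr_ge0 ?mulr_ge0 ?sumr_ge0 | exact: h12].
Qed.

Lemma cexp_ge0 (w : pred T) (h : T -> R) : (forall z, 0 <= h z) -> 0 <= cexp P w h.
Proof. by move=> h_ge0; apply: sumr_ge0 => z _; rewrite mulr_ge0 ?condlaw_ge0. Qed.

Lemma cexp_affine (w : pred T) (a b : R) (h : T -> R) : 0 < Pr P w ->
  cexp P w (fun z => a + b * h z) = a + b * cexp P w h.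
Proof.
move=> /condlaw_pmf [_ sum1]; rewrite /cexp.
under eq_bigr do rewrite mulrDr mulrCA.
by rewrite big_split /= -mulr_suml sum1 mul1r -mulr_sumr.
Qed.

Lemma cexpB (w : pred T) (h1 h2 : T -> R) :
  cexp P w (fun z => h1 z - h2 z) = cexp P w h1 - cexp P w h2.
Proof. by rewrite /cexp -sumrB; apply: eq_bigr => z _; rewrite mulrBr. Qed.

End Conditioning.

Lemma cexp_pushR (R : realType) (T : finType) (P : T -> R) (Q : {ffun T -> T} -> R)
    (w w' : pred T) (g : T -> R) :
  (forall z', pushR Q (condlaw P w) z' = condlaw P w' z') ->
  cexp P w' g = cexp P w (condE_R Q g).
Proof.
move=> push; rewrite /cexp /pushR /condE_R; under eq_bigr do rewrite -push.
under eq_bigr do rewrite mulr_suml; rewrite exchange_big /=.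
apply: eq_bigr => z _; under eq_bigr do rewrite mulr_suml.
rewrite exchange_big /= mulr_sumr; apply: eq_bigr => f _.
rewrite (bigD1 (f z)) //= eqxx mulr1 big1 ?addr0 ?mulrA // => z' /negbTE.
by rewrite eq_sym => ->; rewrite mulr0 mul0r.
Qed.

Lemma drift_ge (R : realType) (T : finType) (Q : {ffun T -> T} -> R) (L : T -> R)
    (eps A : R) (z : T) :
  is_pmf Q -> (forall f, 0 < Q f -> - A <= L (f z) - L z) ->
  eps - (eps + A) * (low_drift Q L eps z)%:R <= condE_R Q L z - L z.
Proof.
move=> [Q_ge0 Q1] hA; rewrite /low_drift; case: ltP => [_|]; last by rewrite mulr0 subr0.
rewrite mulr1 opprD addrA subrr add0r.
have <- : \sum_f Q f * (L (f z) - L z) = condE_R Q L z - L z.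
  by under eq_bigr do rewrite mulrBr; rewrite sumrB -mulr_suml Q1 mul1r.
rewrite -[leLHS]mul1r -Q1 mulr_suml; apply: ler_sum => f _.
have [->|Qf_neq0] := eqVneq (Q f) 0; first by rewrite !mul0r.
by apply: ler_wpM2l => //; apply: hA; rewrite lt_def Qf_neq0 Q_ge0.
Qed.

Lemma Pr_low_drift_le (R : realType) (T : finType) (P : T -> R)
    (Q : {ffun T -> T} -> R) (L : T -> R) (eps D : R) :
  is_pmf P -> 1 - D <= Pr P (fun z => eps <= condE_R Q L z - L z) ->
  Pr P (low_drift Q L eps) <= D.
Proof.
move=> [_ P1] hD.
have -> : Pr P (low_drift Q L eps) = Pr P (predC (fun z => eps <= condE_R Q L z - L z)).
  by apply: eq_bigl => z; rewrite /low_drift /= ltNge.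
by rewrite Pr_predC //; lra.
Qed.

Lemma le_sup_finite_image (R : realType) (T : finType) (V : Type) (vv : T -> V)
    (Vn : set V) (phi : V -> R) :
  Vn `<=` range vv -> forall v, Vn v -> phi v <= sup (phi @` Vn).
Proof.
move=> Vn_sub v Vv; apply: ub_le_sup; last by exists v.
exists (\sum_z `|phi (vv z)|) => _ [w /Vn_sub [z _ <-] <-].
by rewrite (bigD1 z) //= (le_trans (ler_norm _)) // lerDl sumr_ge0.
Qed.

Lemma sum_fibers (M : nmodType) (T : finType) (V : eqType) (vv : T -> V) (s : seq V)
    (p : pred V) (F : T -> M) :
  uniq s -> (forall z, vv z \in s) ->
  \sum_(v <- s | p v) \sum_(z | vv z == v) F z = \sum_(z | p (vv z)) F z.
Proof.
move=> s_uniq s_cover.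
rewrite (exchange_big_dep (fun z => p (vv z))) /= => [|v z pv /eqP -> //].
apply: eq_bigr => z pz; rewrite -big_filter.
have -> : [seq v <- s | p v && (vv z == v)] = [:: vv z].
  rewrite -(filter_pred1_uniq s_uniq (s_cover z)); apply: eq_filter => v /=.
  by rewrite eq_sym; case: eqP => [->|_]; rewrite ?pz ?andbF.
by rewrite big_seq1.
Qed.

Lemma ler_sum_pred (R : realDomainType) (T : finType) (p : pred T) (F : T -> R) :
  (forall z, 0 <= F z) -> \sum_(z | p z) F z <= \sum_z F z.
Proof. by move=> F_ge0; rewrite [leRHS](bigID p) /= lerDl sumr_ge0. Qed.

Lemma sumr_excl_le1 (R : numDomainType) (n : nat) (p : pred nat) :
  (forall i j, p i -> p j -> i = j) -> \sum_(0 <= j < n) ((p j)%:R : R) <= 1.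
Proof.
move=> p_excl; elim: n => [|n IHn]; first by rewrite big_geq.
rewrite big_nat_recr //=; case: (boolP (p n)) => [pn|_]; last by rewrite addr0.
rewrite big1_seq ?add0r // => j; rewrite mem_index_iota => /andP[_ jn].
case: (boolP (p j)) => [pj|//].
by move: jn; rewrite (p_excl _ _ pn pj) ltnn.
Qed.

Lemma sumr_subrange_le (R : realDomainType) (F : nat -> R) (a b m : nat) :
  (forall j, 0 <= F j) -> (a <= b <= m)%N ->
  \sum_(a <= j < b) F j <= \sum_(0 <= j < m) F j.
Proof.
move=> F_ge0 /andP[ab bm].
rewrite (big_cat_nat (leq0n a) (leq_trans ab bm)) (big_cat_nat ab bm) /=.
have : 0 <= \sum_(0 <= j < a) F j by exact: sumr_ge0.
have : 0 <= \sum_(b <= j < m) F j by exact: sumr_ge0.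
lra.
Qed.

Lemma endpoint_far (R : realDomainType) (x y mu K : R) :
  2 * K <= y - x -> K <= `|x - mu| \/ K <= `|y - mu|.
Proof.
move=> Kxy; case: (leP K `|x - mu|) => [|Kx]; [by left | right].
have := ler_distD mu y x; rewrite (distrC y mu) (distrC mu x) => h.
have := ler_norm (y - x); lra.
Qed.

Section Fiber.
Variables (R : realType) (T : finType) (V : eqType).
Variables (P : T -> R) (Q : {ffun T -> T} -> R) (L : T -> R).
Variables (uu : T -> int) (vv : T -> V).
Hypotheses (hP : is_pmf P) (hQ : is_pmf Q).
Variables (Phi : R -> R) (mu : R).
Hypotheses (Phi_ge0 : forall x, 0 <= x -> 0 <= Phi x).
Hypotheses (Phi_conv : convex_nonneg Phi) (Phi_mono : nondecr_nonneg Phi).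
Variables (eps0 A : R).
Hypotheses (eps0_gt0 : 0 < eps0) (A_ge0 : 0 <= A).
Hypothesis hA2 : forall z f, 0 < P z -> 0 < Q f -> - A <= L (f z) - L z.
Variables (v : V) (u0 : int) (m : nat).
Let C (u : int) := fun z => (uu z == u) && (vv z == v).
Hypothesis C_gt0 : forall u : int, u0 < u <= u0 + m%:Z -> 0 < Pr P (C u).
Hypothesis C_shift : forall u : int, u0 < u <= u0 + m%:Z ->
  forall z', pushR Q (condlaw P (C u)) z' = condlaw P (C (u + 1)) z'.
Variables (c ph : R).
Hypotheses (c_gt0 : 0 < c) (ph_gt0 : 0 < ph) (ph_le : ph <= c / 2).
Hypothesis ph_le_C : forall u : int, u0 < u <= u0 + m%:Z ->
  ph <= Pr P (C u) / Pr P (fun z => vv z == v).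
Hypothesis m_ge : c / ph <= m%:R.

Let G x := Phi `|x - mu|.
Let low := low_drift Q L eps0.
Let cell (j : nat) := C (u0 + 1 + j%:Z).
Let pi j := Pr P (cell j).
Let ell j := cexp P (cell j) L.
Let beta j := cexp P (cell j) (fun z => (low z)%:R).
Let q := Pr P (fun z => vv z == v).
Let low_mass := \sum_(z | vv z == v) P z * (low z)%:R.
Let k := m./2.

Let P_ge0 : forall z, 0 <= P z. Proof. by case: hP. Qed.

Let cell_range j : (j < m)%N -> u0 < u0 + 1 + j%:Z <= u0 + m%:Z.
Proof. by move=> jm; apply/andP; split; lia. Qed.

Lemma pi_gt0 j : (j < m)%N -> 0 < pi j.
Proof. by move=> /cell_range /C_gt0. Qed.

Lemma ph_q_le_pi j : (j < m)%N -> ph * q <= pi j.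
Proof.
move=> jm; have pi_le_q : pi j <= q by apply: le_Pr => // z /andP[].
rewrite -ler_pdivlMr ?(lt_le_trans (pi_gt0 jm) pi_le_q) //.
exact: ph_le_C (cell_range jm).
Qed.

Lemma beta_ge0 j : 0 <= beta j.
Proof. by apply: cexp_ge0 => z; case: (low z). Qed.

Lemma ell_step j : (j < m)%N -> eps0 - (eps0 + A) * beta j <= ell j.+1 - ell j.
Proof.
move=> jm; have pi_j_gt0 := pi_gt0 jm.
have -> : ell j.+1 = cexp P (cell j) (condE_R Q L).
  apply: cexp_pushR => z'; rewrite C_shift; last exact: cell_range.
  by congr (condlaw P (C _) z'); lia.
rewrite -cexpB /beta -mulNr -cexp_affine //.
apply: ler_cexp => // z Pz _; rewrite mulNr; apply: drift_ge => // f Qf; exact: hA2.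
Qed.

Lemma ell_window i : (i + k <= m)%N ->
  k%:R * eps0 - (eps0 + A) * \sum_(i <= j < i + k) beta j <= ell (i + k)%N - ell i.
Proof.
move=> ikm.
have -> : k%:R * eps0 - (eps0 + A) * \sum_(i <= j < i + k) beta j
    = \sum_(i <= j < i + k) (eps0 - (eps0 + A) * beta j).
  by rewrite sumrB sumr_const_nat addKn mulr_natl mulr_sumr.
rewrite -telescope_sumr ?leq_addr //; apply: ler_sum_nat => j /andP[_ jk].
by apply: ell_step; lia.
Qed.

Lemma sum_cells_le (F : T -> R) n : (forall z, 0 <= F z) ->
  \sum_(0 <= j < n) \sum_(z | cell j z) F z <= \sum_(z | vv z == v) F z.
Proof.
move=> F_ge0; rewrite (exchange_big_dep (fun z => vv z == v)) /= => [|j z _ /andP[]//].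
apply: ler_sum => z _; rewrite -[leRHS]mulr1.
have -> : \sum_(0 <= j < n | cell j z) F z = F z * \sum_(0 <= j < n) ((cell j z)%:R : R).
  by rewrite mulr_sumr big_mkcond; apply: eq_bigr => j _; case: (cell j z); rewrite ?mulr1 ?mulr0.
apply: ler_wpM2l => //; apply: sumr_excl_le1 => i j /andP[/eqP ui _] /andP[/eqP uj _].
by move: ui uj; lia.
Qed.

Lemma cells_jensen n : (n <= m)%N ->
  \sum_(0 <= j < n) pi j * G (ell j) <= \sum_(z | vv z == v) P z * G (L z).
Proof.
move=> nm; apply: le_trans (sum_cells_le _ _) => [|z]; last first.
  by apply: mulr_ge0 => //; apply: Phi_ge0.
apply: ler_sum_nat => j /andP[_ jn]; have pi_j_gt0 : 0 < pi j by apply: pi_gt0; lia.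
rewrite -Pr_mul_cexp ?gt_eqF //; apply: ler_wpM2l; first exact: ltW.
apply: (jensen_pmf (convex_comp_dist mu Phi_conv Phi_mono)).
exact: condlaw_pmf.
Qed.

Lemma beta_mass : ph * q * \sum_(0 <= j < m) beta j <= low_mass.
Proof.
apply: le_trans (sum_cells_le m _) => [|z]; last by apply: mulr_ge0 => //; case: (low z).
rewrite mulr_sumr; apply: ler_sum_nat => j /andP[_ jm].
rewrite -Pr_mul_cexp ?gt_eqF ?pi_gt0 //; apply: ler_wpM2r; [exact: beta_ge0|exact: ph_q_le_pi].
Qed.

Let B := \sum_(0 <= j < m) beta j.
Let M := 8 * (eps0 + A) / (eps0 * c).

Lemma two_le_m : (2 <= m)%N.
Proof.
have two_le : 2 <= c / ph.
  by rewrite ler_pdivlMr //; have := ph_le; rewrite ler_pdivlMr //; lra.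
by rewrite -(ler_nat R); apply: le_trans two_le m_ge.
Qed.

Lemma k_bounds : (k + k <= m)%N /\ c / 4 <= k%:R * ph.
Proof.
have m_eq := odd_double_half m; rewrite -addnn -/k in m_eq.
split; first lia.
have m_le : (m%:R : R) <= 4 * k%:R.
  by rewrite -natrM ler_nat; have := two_le_m; have := leq_b1 (odd m); lia.
have : c <= m%:R * ph by rewrite -ler_pdivrMr.
have : m%:R * ph <= 4 * k%:R * ph by apply: ler_wpM2r; [exact: ltW|].
lra.
Qed.

Lemma fiber_lb_spread K : 0 <= K -> K <= eps0 * c / (16 * ph) ->
  (eps0 + A) * B <= k%:R * eps0 / 2 ->
  c / 4 * q * Phi K <= \sum_(z | vv z == v) P z * G (L z).
Proof.
move=> K_ge0 K_le spread; have [kk_le_m c4_le] := k_bounds.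
have PhiK_ge0 := Phi_ge0 K_ge0.
have q_ge0 : 0 <= q by exact: sumr_ge0.
have twoK_le : 2 * K <= k%:R * eps0 / 2.
  suff : eps0 * c / (16 * ph) <= k%:R * eps0 / 4 by lra.
  rewrite ler_pdivrMr ?mulr_gt0 //.
  have := ler_wpM2l (ltW eps0_gt0) c4_le; lra.
have pair i : (i < k)%N ->
    ph * q * Phi K <= pi i * G (ell i) + pi (i + k)%N * G (ell (i + k)%N).
  move=> ik; have ikm : (i + k < m)%N by apply: leq_trans kk_le_m; rewrite ltn_add2r.
  have far : 2 * K <= ell (i + k)%N - ell i.
    apply: le_trans (ell_window (ltnW ikm)).
    have : \sum_(i <= j < i + k) beta j <= B.
      by apply: sumr_subrange_le => [j|]; [exact: beta_ge0 | rewrite leq_addr ltnW].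
    have eA_ge0 : 0 <= eps0 + A by rewrite addr_ge0 // ltW.
    move=> /(ler_wpM2l eA_ge0) window_le; lra.
  have phq_i : ph * q <= pi i by exact/ph_q_le_pi/(leq_ltn_trans (leq_addr k i) ikm).
  have phq_ik : ph * q <= pi (i + k)%N by exact: ph_q_le_pi.
  have phq_ge0 : 0 <= ph * q by apply: mulr_ge0 => //; exact: ltW.
  have G_i := Phi_ge0 (normr_ge0 (ell i - mu)).
  have G_ik := Phi_ge0 (normr_ge0 (ell (i + k)%N - mu)).
  case: (endpoint_far mu far) => /(Phi_mono K_ge0) PhiK_le.
    have := ler_pM phq_ge0 PhiK_ge0 phq_i PhiK_le.
    have : 0 <= pi (i + k)%N * G (ell (i + k)%N) by apply: mulr_ge0 => //; lra.
    rewrite /G; lra.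
  have := ler_pM phq_ge0 PhiK_ge0 phq_ik PhiK_le.
  have : 0 <= pi i * G (ell i) by apply: mulr_ge0 => //; lra.
  rewrite /G; lra.
have sum_pairs : k%:R * (ph * q * Phi K) <= \sum_(0 <= j < k + k) pi j * G (ell j).
  rewrite (big_cat_nat (leq0n k) (leq_addl k k)) /=.
  have -> : \sum_(k <= j < k + k) pi j * G (ell j)
      = \sum_(0 <= i < k) pi (i + k)%N * G (ell (i + k)%N).
    by rewrite -{1}(add0n k) big_addn addnK.
  have -> : k%:R * (ph * q * Phi K) = \sum_(0 <= i < k) (ph * q * Phi K).
    by rewrite sumr_const_nat subn0 mulr_natl.
  rewrite -big_split /=.
  by apply: ler_sum_nat => i /andP[_ ik]; exact: pair.
apply: le_trans (cells_jensen kk_le_m); apply: le_trans sum_pairs.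
have qPhiK_ge0 : 0 <= q * Phi K by exact: mulr_ge0.
have := ler_wpM2r qPhiK_ge0 c4_le; lra.
Qed.

Lemma fiber_mass_le_low_mass : k%:R * eps0 / 2 < (eps0 + A) * B -> q <= M * low_mass.
Proof.
move=> conc; have [_ c4_le] := k_bounds.
have m_gt0 : (0 < m)%N by apply: leq_trans two_le_m.
have q_gt0 : 0 < q by apply: lt_le_trans (pi_gt0 m_gt0) _; apply: le_Pr => // z /andP[].
have B_mass := beta_mass.
rewrite /M mulrAC ler_pdivlMr ?mulr_gt0 //.
have : q * (eps0 * c) <= 8 * (ph * q) * (k%:R * eps0 / 2).
  have qe_ge0 : 0 <= 4 * q * eps0 by rewrite !mulr_ge0 // ltW.
  have := ler_wpM2l qe_ge0 c4_le; lra.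
have : ph * q * (k%:R * eps0 / 2) <= ph * q * ((eps0 + A) * B).
  by apply: ler_wpM2l; [apply: mulr_ge0; exact: ltW | exact: ltW].
have : (eps0 + A) * (ph * q * B) <= (eps0 + A) * low_mass.
  by apply: ler_wpM2l => //; rewrite addr_ge0 // ltW.
lra.
Qed.

Lemma fiber_lb K : 0 <= K -> K <= eps0 * c / (16 * ph) ->
  c / 4 * Phi K * (q - M * low_mass) <= \sum_(z | vv z == v) P z * G (L z).
Proof.
move=> K_ge0 K_le; have PhiK_ge0 := Phi_ge0 K_ge0.
have c4PhiK_ge0 : 0 <= c / 4 * Phi K by rewrite mulr_ge0 // divr_ge0 // ltW.
case: (leP ((eps0 + A) * B) (k%:R * eps0 / 2)) => [spread|/fiber_mass_le_low_mass conc].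
  apply: le_trans (fiber_lb_spread K_ge0 K_le spread).
  rewrite [leRHS]mulrAC; apply: ler_wpM2l => //; rewrite lerBlDr lerDl; apply: mulr_ge0.
    by rewrite divr_ge0 ?mulr_ge0 ?addr_ge0 // ltW.
  by apply: sumr_ge0 => z _; apply: mulr_ge0 => //; case: (low z).
apply: le_trans (_ : 0 <= _); first by apply: mulr_ge0_le0 => //; lra.
by apply: sumr_ge0 => z _; apply: mulr_ge0 => //; apply: Phi_ge0.
Qed.
End Fiber.

Section Expectation.
Variables (R : realType) (T : finType) (V : eqType).
Variables (P : T -> R) (Q : {ffun T -> T} -> R) (L : T -> R).
Variables (uu : T -> int) (vv : T -> V).
Hypotheses (hP : is_pmf P) (hQ : is_pmf Q).
Variables (Phi : R -> R) (mu : R).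
Hypotheses (Phi_ge0 : forall x, 0 <= x -> 0 <= Phi x).
Hypotheses (Phi_conv : convex_nonneg Phi) (Phi_mono : nondecr_nonneg Phi).
Variables (eps0 A c : R).
Hypotheses (eps0_gt0 : 0 < eps0) (A_ge0 : 0 <= A) (c_gt0 : 0 < c).
Hypothesis hA2 : forall z f, 0 < P z -> 0 < Q f -> - A <= L (f z) - L z.
Variables (Vn : pred V) (un : V -> int) (mn : V -> nat) (phi : V -> R).
Hypothesis hUn : forall v (u : int), Vn v -> un v < u <= un v + (mn v)%:Z ->
  0 < Pr P (fun z => (uu z == u) && (vv z == v)).
Hypothesis hA3 : forall v (u : int), Vn v -> un v < u <= un v + (mn v)%:Z ->
  forall z', pushR Q (condlaw P (fun z => (uu z == u) && (vv z == v))) z'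
    = condlaw P (fun z => (uu z == u + 1) && (vv z == v)) z'.

Let low := low_drift Q L eps0.
Let M := 8 * (eps0 + A) / (eps0 * c).
Let P_ge0 : forall z, 0 <= P z. Proof. by case: hP. Qed.

Lemma exp_lb_fibers K : 0 <= K ->
  (forall v, Vn v ->
     [/\ 0 < phi v, phi v <= c / 2,
         (forall u : int, un v < u <= un v + (mn v)%:Z ->
            phi v <= Pr P (fun z => (uu z == u) && (vv z == v))
                     / Pr P (fun z => vv z == v)),
         c / phi v <= (mn v)%:R
       & K <= eps0 * c / (16 * phi v)]) ->
  c / 4 * Phi K * (Pr P (fun z => Vn (vv z)) - M * Pr P low)
  <= Exp P (fun z => Phi `|L z - mu|).
Proof.
move=> K_ge0 hphi; set s := undup [seq vv z | z <- enum T].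
have s_uniq : uniq s := undup_uniq _.
have s_cover z : vv z \in s by rewrite mem_undup map_f ?mem_enum.
have fiber v : Vn v ->
    c / 4 * Phi K * (Pr P (fun z => vv z == v) - M * \sum_(z | vv z == v) P z * (low z)%:R)
    <= \sum_(z | vv z == v) P z * Phi `|L z - mu|.
  move=> Vv; have [phi_gt0 phi_le phi_le_C m_ge K_le] := hphi v Vv.
  exact: (fiber_lb hP hQ mu Phi_ge0 Phi_conv Phi_mono eps0_gt0 A_ge0 hA2
    (fun u => @hUn v u Vv) (fun u => @hA3 v u Vv) c_gt0 phi_gt0 phi_le phi_le_C m_ge
    K_ge0 K_le).
have c4PhiK_ge0 : 0 <= c / 4 * Phi K by rewrite mulr_ge0 ?divr_ge0 ?Phi_ge0 // ltW.
have M_ge0 : 0 <= M by rewrite divr_ge0 ?mulr_ge0 ?addr_ge0 // ltW.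
apply: le_trans (_ : c / 4 * Phi K * (Pr P (fun z => Vn (vv z))
    - M * \sum_(z | Vn (vv z)) P z * (low z)%:R) <= _).
  apply: ler_wpM2l => //; rewrite lerD2l lerN2; apply: ler_wpM2l => //.
  by rewrite Pr_indicator; apply: ler_sum_pred => z; rewrite mulr_ge0.
have -> : c / 4 * Phi K * (Pr P (fun z => Vn (vv z))
    - M * \sum_(z | Vn (vv z)) P z * (low z)%:R)
  = \sum_(v <- s | Vn v) c / 4 * Phi K
      * (Pr P (fun z => vv z == v) - M * \sum_(z | vv z == v) P z * (low z)%:R).
  by rewrite -mulr_sumr sumrB -mulr_sumr /Pr !sum_fibers.
apply: le_trans (ler_sum _ fiber) _.
by rewrite sum_fibers //; apply: ler_sum_pred => z; rewrite mulr_ge0 ?Phi_ge0.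
Qed.

Hypothesis hVn : forall v, Vn v -> 0 < Pr P (fun z => vv z == v).
Hypothesis hA4 : forall v, Vn v ->
  [/\ 0 < phi v,
      (forall u : int, un v < u <= un v + (mn v)%:Z ->
         phi v <= Pr P (fun z => (uu z == u) && (vv z == v))
                  / Pr P (fun z => vv z == v))
    & c / phi v <= (mn v)%:R].

Let S := sup [set phi v | v in [set v | Vn v]].

Lemma exp_lb_sup (b delta : R) : S <= c / 2 ->
  0 < b -> b <= Pr P (fun z => Vn (vv z)) -> Pr P low <= delta ->
  c / 4 * Phi (eps0 * c / (16 * S)) * (b - M * delta)
  <= Exp P (fun z => Phi `|L z - mu|).
Proof.
move=> S_le b_gt0 b_le low_le; have Vn_gt0 := lt_le_trans b_gt0 b_le.
have Vn_sub : [set v | Vn v] `<=` range vv.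
  move=> v /hVn; case: (pickP (fun z => vv z == v)) => [z /eqP <- _|none].
    by exists z.
  by rewrite /Pr big_pred0 // ltxx.
have phi_le_S v (Vv : Vn v) : phi v <= S := le_sup_finite_image phi Vn_sub Vv.
have [v0 Vv0] : exists v, Vn v.
  case: (pickP (fun z => Vn (vv z))) => [z Vz|none]; first by exists (vv z).
  by move: Vn_gt0; rewrite /Pr big_pred0 // ltxx.
have [phi0_gt0 _ _] := hA4 Vv0.
have S_gt0 : 0 < S := lt_le_trans phi0_gt0 (phi_le_S v0 Vv0).
have K_ge0 : 0 <= eps0 * c / (16 * S) by rewrite divr_ge0 ?mulr_ge0 // ltW.
apply: le_trans (exp_lb_fibers K_ge0 _) => [|v Vv].
  rewrite -[leLHS]mulrA -[leRHS]mulrA.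
  apply: ler_wpM2l; first by rewrite divr_ge0 // ltW.
  apply: ler_wpM2l; first exact: Phi_ge0.
  have M_ge0 : 0 <= M by rewrite divr_ge0 ?mulr_ge0 ?addr_ge0 // ltW.
  have := ler_wpM2l M_ge0 low_le; lra.
have [phi_gt0 phi_le_C m_ge] := hA4 Vv.
split=> //; first exact: le_trans (phi_le_S v Vv) S_le.
apply: ler_wpM2l; first by rewrite mulr_ge0 // ltW.
by rewrite lef_pV2 ?posrE ?mulr_gt0 // ler_pM2l //; exact: phi_le_S.
Qed.

End Expectation.

Theorem theorem2p1
  (R : realType) (Zt : nat -> finType)
  (* law of Z on Z_n *)
  (P : forall n, Zt n -> R) (hP : forall n, is_pmf (P n))
  (* law of the random transformation (a random map Z_n -> Z_n) *)
  (Q : forall n, {ffun Zt n -> Zt n} -> R) (hQ : forall n, is_pmf (Q n))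
  (L : forall n, Zt n -> R)
  (d : nat) (uu : forall n, Zt n -> int) (vv : forall n, Zt n -> 'rV[int]_d)
  (Phi : R -> R) (mu : nat -> R)
  (hPhi0 : forall x, 0 <= x -> 0 <= Phi x)
  (hPhiconv : convex_nonneg Phi) (hPhimono : nondecr_nonneg Phi)
  (* (A1) *)
  (eps0 : R) (Delta : nat -> R) (heps0 : 0 < eps0)
  (hDelta : Delta n @[n --> \oo] --> 0)
  (hA1 : forall n,
     1 - Delta n <= Pr (P n) (fun z =>
        eps0 <= condE_R (Q n) (L n) z - L n z))
  (* (A2) *)
  (A : R)
  (hA2 : forall n (z : Zt n) (f : {ffun Zt n -> Zt n}),
     0 < P n z -> 0 < Q n f -> - A <= L n (f z) - L n z)
  (* (A3) *)
  (Vn : nat -> pred 'rV[int]_d) (un : nat -> 'rV[int]_d -> int)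
  (mn : nat -> 'rV[int]_d -> nat)
  (hVn : forall n v, Vn n v -> 0 < Pr (P n) (fun z => vv n z == v))
  (hUn : forall n v (u : int), Vn n v ->
     un n v < u <= un n v + (mn n v)%:Z ->
     0 < Pr (P n) (fun z => (uu n z == u) && (vv n z == v)))
  (hA3 : forall n v (u : int), Vn n v ->
     un n v < u <= un n v + (mn n v)%:Z ->
     forall z',
       pushR (Q n) (condlaw (P n) (fun z => (uu n z == u) && (vv n z == v))) z'
       = condlaw (P n) (fun z => (uu n z == u + 1) && (vv n z == v)) z')
  (* (A4) with c(v) = c constant *)
  (c : R) (hc : 0 < c) (phi : nat -> 'rV[int]_d -> R)
  (hA4 : exists n1 : nat, forall n v, (n1 <= n)%N -> Vn n v ->
     [/\ 0 < phi n v,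
         (forall u : int, un n v < u <= un n v + (mn n v)%:Z ->
            phi n v <= Pr (P n) (fun z => (uu n z == u) && (vv n z == v))
                       / Pr (P n) (fun z => vv n z == v))
       & c / phi n v <= (mn n v)%:R])
  (* varphi(n) := sup_{v in V_n} phi_v(n) tends to 0 *)
  (hphi : sup [set phi n v | v in [set v | Vn n v]] @[n --> \oo] --> 0)
  (* P(V in V_n) >= b_o eventually *)
  (b0 : R) (hb0 : 0 < b0)
  (hb : exists N : nat, forall n, (N <= n)%N ->
     b0 <= Pr (P n) (fun z => Vn n (vv n z))) :
  forall co : R, 0 < co < b0 * c / 8 ->
  exists N : nat, forall n, (N <= n)%N ->
    Phi (eps0 * c / (16 * sup [set phi n v | v in [set v | Vn n v]])) * co
    <= Exp (P n) (fun z => Phi `|L n z - mu n|).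
Proof.
move=> co /andP[co_gt0 co_lt].
set A' := Num.max A 0.
have A'_ge0 : 0 <= A' by rewrite le_max lexx orbT.
have hA2' n z f : 0 < P n z -> 0 < Q n f -> - A' <= L n (f z) - L n z.
  by move=> Pz Qf; apply: le_trans (hA2 n z f Pz Qf); rewrite lerN2 le_max lexx.
set M := 8 * (eps0 + A') / (eps0 * c).
have M_gt0 : 0 < M by rewrite divr_gt0 ?mulr_gt0 ?ltr_wpDr.
(* delta is chosen so that co = c / 4 * (b0 - M * delta). *)
set delta := (b0 - 4 * co / c) / M.
have delta_gt0 : 0 < delta.
  by rewrite divr_gt0 // subr_gt0 ltr_pdivrMr //; move: co_lt; rewrite ltr_pdivlMr //; lra.
have [n1 hA4n] := hA4; have [Nb hbn] := hb.
set K := fun n => eps0 * c / (16 * sup [set phi n v | v in [set v | Vn n v]]).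
suff [N _ HN] : \forall n \near \oo,
    Phi (K n) * co <= Exp (P n) (fun z => Phi `|L n z - mu n|) by exists N => n /HN.
near=> n.
have S_le : sup [set phi n v | v in [set v | Vn n v]] <= c / 2.
  by near: n; apply: cvgr_le hphi _ _; rewrite divr_gt0.
have n1_le : (n1 <= n)%N by near: n; exact: nbhs_infty_ge.
have b0_le : b0 <= Pr (P n) (fun z => Vn n (vv n z)) by near: n; exists Nb.
have low_le : Pr (P n) (low_drift (Q n) (L n) eps0) <= delta.
  apply: le_trans (Pr_low_drift_le (hP n) (hA1 n)) _.
  by near: n; exact: cvgr_le hDelta _ delta_gt0.
have -> : Phi (K n) * co = c / 4 * Phi (K n) * (b0 - M * delta).
  by rewrite /delta; field; rewrite !gt_eqF.
exact: (exp_lb_sup (hP n) (hQ n) (mu n) hPhi0 hPhiconv hPhimono heps0 A'_ge0 hc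
  (hA2' n) (hUn n) (hA3 n) (hVn n) (fun v => hA4n n v n1_le) S_le hb0 b0_le low_le).
Unshelve. all: by end_near.
Qed.
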